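(* Let $r\ge1$, $n$ be integers and let $\sigma:\mathbb{Z}_n\to\{0,1\}$ be a temporally periodic configuration in which every maximal homogeneous block has length at most $r$. Then $\sigma$ is balanced, i.e. $|\{i:\sigma(i)=0\}|=|\{i:\sigma(i)=1\}|$.
   Context: Cells are elements of $\mathbb{Z}_n$, arithmetic mod $n$; $[a,b]$ denotes the cyclic interval $a,\dots,b$. The majority rule with radius $r$: $\mathrm{maj}_r(\sigma)(i)=0$ if among the cells of $[i-r,i+r]$ strictly more have value $0$ than $1$ under $\sigma$, and $=1$ otherwise. $\sigma$ is temporally periodic if $\mathrm{maj}_r(\mathrm{maj}_r(\sigma))=\sigma$. A maximal homogeneous block of $\sigma$ with value $\beta$ is a cell interval $[i,j]$ with $\sigma(k)=\beta$ for all $k\in[i,j]$ and $\sigma(i-1)=\sigma(j+1)=1-\beta$. *)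

From mathcomp Require Import all_boot all_order all_algebra.
Set Implicit Arguments. Unset Strict Implicit. Unset Printing Implicit Defensive.
Import GRing.Theory.
Local Open Scope ring_scope.

(* Configurations: sigma : 'Z_n -> bool, with false = 0 and true = 1.
   'Z_n is the ring Z/nZ (faithful for n >= 2). *)

Definition window (n r : nat) (i : 'Z_n) : seq 'Z_n :=
  [seq i - r%:R + k%:R | k <- iota 0 (r.*2.+1)].

Definition zeros_in (n r : nat) (s : 'Z_n -> bool) (i : 'Z_n) : nat :=
  count (fun j => ~~ s j) (window r i).
Definition ones_in (n r : nat) (s : 'Z_n -> bool) (i : 'Z_n) : nat :=
  count (fun j => s j) (window r i).

Definition maj (n r : nat) (s : 'Z_n -> bool) : 'Z_n -> bool :=
  fun i => ~~ (ones_in r s i < zeros_in r s i)%N.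

Definition temporally_periodic (n r : nat) (s : 'Z_n -> bool) : Prop :=
  forall i, maj r (maj r s) i = s i.

(* The cyclic interval [i, i + L - 1] (1 <= L <= n) is a maximal homogeneous
   block of value b: all its cells have value b, and either it is the whole
   ring (L = n), or the neighbouring cells i-1 and i+L have value 1-b. *)
Definition max_hom_block (n : nat) (s : 'Z_n -> bool) (i : 'Z_n) (L : nat)
    (b : bool) : Prop :=
  [/\ (0 < L)%N, (L <= n)%N,
      (forall k : nat, (k < L)%N -> s (i + k%:R) = b)
    & L = n \/ (s (i - 1) = ~~ b /\ s (i + L%:R) = ~~ b)].

Definition balanced (n : nat) (s : 'Z_n -> bool) : Prop :=
  #|[pred i | ~~ s i]| = #|[pred i | s i]|.

(* Lift sigma and maj_r sigma to n-periodic sequences f, g : nat -> bool; temporal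
   periodicity says that each of them is the r-majority of the other. A switch of g at A
   (g A <> g (A + 1)) forces the window of A to be balanced, with f (A - r) = g A and
   f (A + r + 1) = g (A + 1). If b is the next switch of g and p, p' are the first
   switches of f from A - r and from A + r + 1, then p + p' = A + b, and f has on (p, p']
   the same excess (number of 1s minus number of 0s) as g on (A, b]. Modulo n, A |-> p and
   A |-> p' inject the switches of g into those of f, so by symmetry they are bijections.
   Summing over the switches of g, the periodic parts cancel and X W = Y V, where X, Y are
   the excesses of f, g over a period, V = sum (b - A) >= 0 and W = sum (p' - p); as runs
   have length at most r, p < A and W - V = 2 sum (A - p) > 0. With the symmetric relation
   Y W' = X V' this forces X = 0. *)

From mathcomp Require Import all_boot all_order all_algebra zify ring.
Import GRing.Theory Num.Theory.
Set Implicit Arguments. Unset Strict Implicit. Unset Printing Implicit Defensive.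

Definition sgn (b : bool) : int := if b then 1%R else (-1)%R.

Definition excess (h : nat -> bool) (k : nat) : int := (\sum_(j < k) sgn (h j))%R.

Definition switch (h : nat -> bool) (j : nat) : bool := h j != h j.+1.

Definition periodic (T : Type) (n : nat) (h : nat -> T) : Prop :=
  forall j, h (j + n) = h j.

Definition runs_at_most (r : nat) (h : nat -> bool) : Prop :=
  forall j, ~ (forall k, k <= r -> h (j + k) = h j).

Lemma excessS h k : excess h k.+1 = (excess h k + sgn (h k))%R.
Proof. by rewrite /excess big_ord_recr. Qed.

Lemma excessD h u m :
  excess h (u + m) = (excess h u + \sum_(k < m) sgn (h (u + k)%N))%R.
Proof.
elim: m => [|m IH]; first by rewrite addn0 big_ord0 addr0.
by rewrite addnS excessS IH big_ord_recr addrA.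
Qed.

Lemma excess_run h u v c : u <= v -> (forall k, u <= k < v -> h k = c) ->
  excess h v = (excess h u + (v - u)%:Z * sgn c)%R.
Proof.
move=> uv hc; rewrite -{1}(subnKC uv) excessD; congr (_ + _)%R.
rewrite (eq_bigr (fun _ => sgn c)) => [|k _]; last by rewrite hc //; have := ltn_ord k; lia.
by rewrite sumr_const card_ord -mulr_natl natz.
Qed.

Lemma sum_sgn (h : nat -> bool) u m :
  (\sum_(k < m) sgn (h (u + k)%N) = 2 * (\sum_(k < m) h (u + k))%N%:Z - m%:Z)%R.
Proof.
elim: m => [|m IH]; first by rewrite !big_ord0.
by rewrite !big_ord_recr /= IH; case: (h (u + m)) => /=; lia.
Qed.

Lemma excess_sum h m : excess h m = (2 * (\sum_(k < m) h k)%N%:Z - m%:Z)%R.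
Proof. by rewrite -[m in LHS]add0n excessD (sum_sgn h 0 m) /excess big_ord0 add0r. Qed.

Lemma excess_balanced (h : nat -> bool) j m :
  \sum_(k < m.*2) h (j + k) = m -> excess h (j + m.*2) = excess h j.
Proof. by rewrite excessD sum_sgn => ->; rewrite -muln2; lia. Qed.

Lemma periodicMn T n (h : nat -> T) : periodic n h -> forall j q, h (j + q * n) = h j.
Proof. by move=> hper j; elim=> [|q IH]; rewrite ?addn0 // mulSn addnA addnAC hper. Qed.

Lemma periodic_mod T n (h : nat -> T) : periodic n h -> forall j, h j = h (j %% n).
Proof. by move=> hper j; rewrite {1}(divn_eq j n) addnC periodicMn. Qed.

Lemma periodic_switch n h : periodic n h -> periodic n (switch h).
Proof. by move=> hper j; rewrite /switch -addSn !hper. Qed.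

Lemma excess_periodD n h : periodic n h -> forall k, excess h (k + n) = (excess h k + excess h n)%R.
Proof.
move=> hper; elim=> [|k IH]; first by rewrite add0n /excess big_ord0 add0r.
by rewrite addSn !excessS IH hper addrAC.
Qed.

Lemma switch_between h u v : u <= v -> h u != h v -> exists2 j, u <= j < v & switch h j.
Proof.
elim: v => [|v IH]; first by rewrite leqn0 => /eqP ->; rewrite eqxx.
rewrite leq_eqVlt => /orP[/eqP ->|]; first by rewrite eqxx.
rewrite ltnS => uv huv; have [/eqP huv'|/(IH uv)[j /andP[uj jv] sj]] := boolP (h u == h v).
  by exists v; rewrite ?uv //= /switch -huv'.
by exists j => //; lia.
Qed.

Lemma run_until h u v c : h u = c -> (forall k, u <= k < v -> h k = c -> ~~ switch h k) ->
  forall k, u <= k <= v -> h k = c.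
Proof.
move=> hu hc; elim=> [|k IH] /andP[uk kv]; first by move: uk; rewrite leqn0 => /eqP <-.
have [/eqP <-|uk'] := boolP (u == k.+1) => //.
have hk : h k = c by apply: IH; lia.
by have /negPn/eqP <- : ~~ switch h k by apply: hc => //; lia.
Qed.

Definition next_switch (n : nat) (h : nat -> bool) (j : nat) : nat :=
  j + find (fun d => switch h (j + d)) (iota 0 n).

Section NextSwitch.
Variables (n : nat) (h : nat -> bool).
Hypotheses (n_gt0 : 0 < n) (h_per : periodic n h) (h_switches : exists j, switch h j).

Lemma has_switch_within j : has (fun d => switch h (j + d)) (iota 0 n).
Proof.
have [j0 sw_j0] := h_switches; apply/hasP; exists ((j0 + j * n - j) %% n).
  by rewrite mem_iota add0n ltn_pmod.
have jle : j <= j0 + j * n by rewrite (leq_trans _ (leq_addl _ _)) // leq_pmulr.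
rewrite -(periodicMn (periodic_switch h_per) _ ((j0 + j * n - j) %/ n)).
by rewrite -addnA [X in j + X]addnC -divn_eq subnKC // periodicMn //; apply: periodic_switch.
Qed.

Lemma leq_next_switch j : j <= next_switch n h j.
Proof. exact: leq_addr. Qed.

Lemma next_switch_lt j : next_switch n h j < j + n.
Proof. by rewrite ltn_add2l; move: (has_switch_within j); rewrite has_find size_iota. Qed.

Lemma switch_next_switch j : switch h (next_switch n h j).
Proof.
have hw := has_switch_within j; have := nth_find 0 hw.
by rewrite nth_iota ?add0n //; move: hw; rewrite has_find size_iota.
Qed.

Lemma no_switch_before j k : j <= k < next_switch n h j -> ~~ switch h k.
Proof.
move=> /andP[jk kn]; have kjn : k - j < n by have := next_switch_lt j; lia.
have := @before_find _ 0 (fun d => switch h (j + d)) (iota 0 n) (k - j).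
by rewrite nth_iota // add0n subnKC // => -> //; rewrite ltn_subLR.
Qed.

Lemma next_switch_min j k : j <= k -> switch h k -> next_switch n h j <= k.
Proof.
move=> jk sk; rewrite leqNgt; apply/negP => lt_k.
by move: (@no_switch_before j k); rewrite jk lt_k sk => /(_ isT).
Qed.

Lemma next_switch_lt_change u v : u <= v -> h u != h v -> next_switch n h u < v.
Proof.
move=> uv huv; have [j /andP[uj jv] sj] := switch_between uv huv.
exact: leq_ltn_trans (next_switch_min uj sj) jv.
Qed.

Lemma next_switch_run j k : j <= k <= next_switch n h j -> h k = h j.
Proof.
apply: run_until => // k' /andP[jk' k'n] _.
by apply: (@no_switch_before j); rewrite jk'.
Qed.

Lemma next_switch_flip j : h (next_switch n h j).+1 = ~~ h j.
Proof.
have := switch_next_switch j; rewrite /switch (@next_switch_run j) ?leq_next_switch ?leqnn //.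
by case: (h j); case: (h _.+1).
Qed.

Lemma next_switchMn j q : next_switch n h (j + q * n) = next_switch n h j + q * n.
Proof.
rewrite /next_switch addnAC; congr (_ + _ + _); apply: eq_find => d /=.
by rewrite addnAC periodicMn //; apply: periodic_switch.
Qed.

Lemma next_switch_unique A A' c : switch h A -> switch h A' ->
  A < c <= next_switch n h A.+1 -> A' < c <= next_switch n h A'.+1 -> A = A'.
Proof.
have le_sw B B' : switch h B' -> B < c <= next_switch n h B.+1 -> B' < c -> B' <= B.
  move=> sB' /andP[Bc cB] B'c; rewrite leqNgt; apply/negP => BB'.
  by move: (@no_switch_before B.+1 B'); rewrite BB' sB' (leq_trans B'c cB) => /(_ isT).
move=> sA sA' hA hA'; apply/eqP; rewrite eqn_leq.
by rewrite (le_sw A' A) ?(le_sw A A') //; case/andP: hA; case/andP: hA'.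
Qed.
End NextSwitch.

Definition majority_of (r : nat) (f g : nat -> bool) : Prop :=
  forall j, g (j + r) = (r < \sum_(k < r.*2.+1) f (j + k)).

Lemma switch_majority r f g c : majority_of r f g -> r <= c -> switch g c ->
  [/\ f (c - r) = g c, f (c + r.+1) = g c.+1 & excess f (c + r.+1) = excess f (c - r).+1].
Proof.
(* The windows of c and c + 1 differ only in the cells c - r and c + r + 1. *)
move=> maj_fg rc; rewrite -(subnK rc) addnK; move: (c - r) => j {rc c}.
have -> : j + r + r.+1 = j.+1 + r.*2 by lia.
set T := \sum_(k < r.*2) f (j.+1 + k).
have win0 : \sum_(k < r.*2.+1) f (j + k) = f j + T.
  rewrite big_ord_recl addn0; congr (_ + _); apply: eq_bigr => i _.
  by rewrite lift0 addnS -addSn.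
have win1 : \sum_(k < r.*2.+1) f (j.+1 + k) = T + f (j.+1 + r.*2).
  by rewrite big_ord_recr.
rewrite /switch -addSn !maj_fg win0 win1 => sw.
have T_r : T = r.
  by move: sw; case: (f j) (f _) => [] [] /=; case: ltnP => ?; case: ltnP => ? //=; lia.
rewrite T_r excess_balanced //.
by split=> //; [case: (f j) | case: (f _)]; rewrite /= ?add0n ?addn0 ?add1n ?addn1 ?ltnSn ?ltnn.
Qed.

Definition drift (n : nat) (h : nat -> bool) (k : nat) : int :=
  (n%:Z * excess h k - excess h n * k%:Z)%R.

Lemma drift_periodic n h : periodic n h -> periodic n (drift n h).
Proof. by move=> h_per k; rewrite /drift excess_periodD // PoszD; ring. Qed.

Lemma excessB_drift n h u v : (n%:Z * (excess h u - excess h v)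
  = drift n h u - drift n h v + excess h n * (u%:Z - v%:Z))%R.
Proof. by rewrite /drift; ring. Qed.

Section Correspondence.
Variables (n r : nat) (f g : nat -> bool).
Hypotheses (n_gt0 : 0 < n) (r2_le_n : r.*2 <= n) (f_per : periodic n f) (g_per : periodic n g).
Hypotheses (f_switches : exists j, switch f j) (g_switches : exists j, switch g j).
Hypotheses (maj_fg : majority_of r f g) (maj_gf : majority_of r g f).

Definition run_end (A : nat) : nat := next_switch n g A.+1.
Definition left_partner (A : nat) : nat := next_switch n f (A - r).
Definition right_partner (A : nat) : nat := next_switch n f (A + r.+1).

Section Run.
Variable A : nat.
Hypotheses (sw_A : switch g A) (r2_le_A : r.*2 <= A).

Lemma g_before_run : g A = ~~ g A.+1.
Proof. by move: sw_A; rewrite /switch; case: (g A); case: (g A.+1). Qed.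

Lemma g_on_run k : A.+1 <= k <= run_end A -> g k = g A.+1.
Proof. exact: next_switch_run. Qed.

Lemma g_after_run : g (run_end A).+1 = ~~ g A.+1.
Proof. exact: next_switch_flip. Qed.

Lemma A_lt_run_end : A < run_end A.
Proof. exact: leq_next_switch. Qed.

Lemma switch_run_end : switch g (run_end A).
Proof. exact: switch_next_switch. Qed.

Lemma r_le_A : r <= A.
Proof. lia. Qed.

Lemma r_le_run_end : r <= run_end A.
Proof. by have := A_lt_run_end; have := r_le_A; lia. Qed.

Lemma left_partner_spec :
  [/\ A - r <= left_partner A < run_end A - r,
      forall k, A - r <= k <= left_partner A -> f k = ~~ g A.+1
    & forall k, (left_partner A).+1 <= k <= run_end A - r -> f k = g A.+1].
Proof.
have b_gt := A_lt_run_end.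
have [fA _ _] := switch_majority maj_fg r_le_A sw_A.
have [fb _ _] := switch_majority maj_fg r_le_run_end switch_run_end.
rewrite g_before_run in fA; rewrite g_on_run ?b_gt ?leqnn // in fb.
have p_ge : A - r <= left_partner A by apply: leq_next_switch.
have p_lt : left_partner A < run_end A - r.
  by apply: (next_switch_lt_change n_gt0 f_per f_switches); [lia | rewrite fA fb; case: (g _)].
split=> [|k hk|]; first by rewrite p_ge.
  by rewrite (next_switch_run n_gt0 f_per f_switches hk).
apply: run_until => [|k /andP[pk kb] fk].
  by rewrite (next_switch_flip n_gt0 f_per f_switches) fA negbK.
apply/negP => sw_k; have rk : r <= k by lia.
have [_ gk _] := switch_majority maj_gf rk sw_k.
rewrite g_on_run in gk; last by lia.
by move: sw_k; rewrite /switch fk gk eqxx.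
Qed.

Lemma right_partner_spec :
  [/\ A + r.+1 <= right_partner A < run_end A + r.+1,
      forall k, A + r.+1 <= k <= right_partner A -> f k = g A.+1
    & forall k, (right_partner A).+1 <= k <= run_end A + r.+1 -> f k = ~~ g A.+1].
Proof.
have b_gt := A_lt_run_end.
have [_ fA _] := switch_majority maj_fg r_le_A sw_A.
have [_ fb _] := switch_majority maj_fg r_le_run_end switch_run_end.
rewrite g_after_run in fb.
have q_ge : A + r.+1 <= right_partner A by apply: leq_next_switch.
have q_lt : right_partner A < run_end A + r.+1.
  by apply: (next_switch_lt_change n_gt0 f_per f_switches); [lia | rewrite fA fb; case: (g _)].
split=> [|k hk|]; first by rewrite q_ge.
  by rewrite (next_switch_run n_gt0 f_per f_switches hk).
apply: run_until => [|k /andP[qk kb] fk].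
  by rewrite (next_switch_flip n_gt0 f_per f_switches) fA.
apply/negP => sw_k; have rk : r <= k by lia.
have [gk _ _] := switch_majority maj_gf rk sw_k.
by rewrite g_on_run ?fk in gk; [case: (g A.+1) gk | lia].
Qed.

Lemma partners_excess :
  left_partner A + right_partner A = A + run_end A /\
  (excess f (right_partner A).+1 - excess f (left_partner A).+1
   = excess g (run_end A).+1 - excess g A.+1)%R.
Proof.
have [/andP[pA pb] f_p f_pb] := left_partner_spec.
have [/andP[qA qb] f_q f_qb] := right_partner_spec.
have b_gt := A_lt_run_end.
have [_ _ balA] := switch_majority maj_fg r_le_A sw_A.
have [_ _ balb] := switch_majority maj_fg r_le_run_end switch_run_end.
have E1 : excess f (right_partner A).+1 = (excess f (A + r.+1)
    + ((right_partner A).+1 - (A + r.+1))%:Z * sgn (g A.+1))%R.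
  by apply: excess_run => [|k hk]; [lia | apply: f_q; lia].
have E2 : excess f (left_partner A).+1 = (excess f (A - r).+1
    + ((left_partner A).+1 - (A - r).+1)%:Z * sgn (~~ g A.+1))%R.
  by apply: excess_run => [|k hk]; [lia | apply: f_p; lia].
have E3 : excess f (run_end A + r.+1) = (excess f (right_partner A).+1
    + (run_end A + r.+1 - (right_partner A).+1)%:Z * sgn (~~ g A.+1))%R.
  by apply: excess_run => [|k hk]; [lia | apply: f_qb; lia].
have E4 : excess f (run_end A - r).+1 = (excess f (left_partner A).+1
    + ((run_end A - r).+1 - (left_partner A).+1)%:Z * sgn (g A.+1))%R.
  by apply: excess_run => [|k hk]; [lia | apply: f_pb; lia].
have G : excess g (run_end A).+1 = (excess g A.+1
    + ((run_end A).+1 - A.+1)%:Z * sgn (g A.+1))%R.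
  by apply: excess_run => [|k hk]; [lia | apply: g_on_run; lia].
(* The excess of f on (p, p'] is both (p + p' - 2A) and (2b - p - p') times sgn (g A.+1). *)
by case: (g A.+1) E1 E2 E3 E4 G => /= E1 E2 E3 E4 G; lia.
Qed.

Lemma left_partner_lt_A : runs_at_most r f \/ runs_at_most r g -> left_partner A < A.
Proof.
have [/andP[pA pb] f_p _] := left_partner_spec.
rewrite ltnNge; case=> short; apply/negP => Ap.
  apply: (short (A - r)) => k kr; rewrite !f_p //; lia.
apply: (short A.+1) => k kr; rewrite !g_on_run //; lia.
Qed.

End Run.

Definition ord_mod (k : nat) : 'I_n := Ordinal (ltn_pmod k n_gt0).

Definition switch_set (h : nat -> bool) : {set 'I_n} := [set a : 'I_n | switch h a].

Lemma ord_mod_switch h k : periodic n h -> switch h k -> ord_mod k \in switch_set h.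
Proof. by move=> hper sk; rewrite inE /= -(periodic_mod (periodic_switch hper)). Qed.

(* A switch a < n of g is used through its copy a + n, so that a + n - r does not
   truncate. *)
Lemma r2_le_anchor (a : 'I_n) : r.*2 <= a + n.
Proof. exact: leq_trans r2_le_n (leq_addl _ _). Qed.

Lemma switch_set_anchor a : a \in switch_set g -> switch g (a + n).
Proof. by rewrite inE (periodic_switch g_per). Qed.

Lemma sum_periodic_reindex (S T : {set 'I_n}) (F : nat -> int) (u v : 'I_n -> nat) :
  periodic n F -> #|S| = #|T| ->
  {in S &, injective (fun a : 'I_n => ord_mod (u a))} -> (forall a, a \in S -> ord_mod (u a) \in T) ->
  {in S &, injective (fun a : 'I_n => ord_mod (v a))} -> (forall a, a \in S -> ord_mod (v a) \in T) ->
  (\sum_(a in S) F (u a) = \sum_(a in S) F (v a))%R.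
Proof.
move=> F_per card_ST.
suff sum_T w : {in S &, injective (fun a : 'I_n => ord_mod (w a))} ->
    (forall a, a \in S -> ord_mod (w a) \in T) ->
    (\sum_(a in S) F (w a) = \sum_(i in T) F i)%R.
  by move=> u_inj uT v_inj vT; rewrite (sum_T u) // (sum_T v).
move=> w_inj wT; have <- : [set ord_mod (w a) | a in S] = T.
  apply/eqP; rewrite eqEcard card_in_imset // card_ST leqnn andbT.
  by apply/subsetP => _ /imsetP[a aS ->]; apply: wT.
by rewrite big_imset //=; apply: eq_bigr => a _; rewrite (periodic_mod F_per).
Qed.

Lemma run_mod_inj (F : 'I_n -> nat) d e :
  (forall a, a \in switch_set g -> a + n + e < F a + d <= run_end (a + n) + e) ->
  {in switch_set g &, injective (fun a : 'I_n => ord_mod (F a))}.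
Proof.
move=> hF a1 a2 s1 s2 /(congr1 val) /= F12.
wlog le12 : a1 a2 s1 s2 F12 / F a1 <= F a2.
  move=> W; case: (leqP (F a1) (F a2)) => [|/ltnW] le; first exact: W.
  by apply/esym/W.
have [/andP[l1 u1] /andP[l2 u2]] := (hF a1 s1, hF a2 s2).
have [q Fq] : exists q, F a2 = F a1 + q * n.
  by exists ((F a2 - F a1) %/ n); rewrite divnK ?subnKC // -eqn_mod_dvd // F12.
have shifted : switch g (a1 + n + q * n).
  by rewrite (periodicMn (periodic_switch g_per)); apply: switch_set_anchor.
have : a1 + n + q * n = a2 + n.
  apply: (@next_switch_unique n g n_gt0 g_per g_switches _ _ (F a2 + d - e) shifted
    (switch_set_anchor s2)); last by move: l2 u2; rewrite /run_end; lia.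
  by rewrite -addSn next_switchMn //; move: l1 u1; rewrite /run_end Fq; lia.
case: q {Fq shifted} => [|q] eq_a; first by apply: val_inj => /=; lia.
by move: eq_a (ltn_ord a2); rewrite mulSn; lia.
Qed.

Lemma left_partner_inj :
  {in switch_set g &, injective (fun a : 'I_n => ord_mod (left_partner (a + n)))}.
Proof.
apply: (@run_mod_inj _ r.+1 0) => a /switch_set_anchor sw.
by have [/andP[pA pb] _ _] := left_partner_spec sw (r2_le_anchor a); lia.
Qed.

Lemma right_partner_inj :
  {in switch_set g &, injective (fun a : 'I_n => ord_mod (right_partner (a + n)))}.
Proof.
apply: (@run_mod_inj _ 0 r) => a /switch_set_anchor sw.
by have [/andP[qA qb] _ _] := right_partner_spec sw (r2_le_anchor a); lia.
Qed.

Lemma run_end_inj : {in switch_set g &, injective (fun a : 'I_n => ord_mod (run_end (a + n)))}.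
Proof. by apply: (@run_mod_inj _ 0 0) => a _; rewrite !addn0 leqnn A_lt_run_end. Qed.

Lemma anchor_inj : {in switch_set g &, injective (fun a : 'I_n => ord_mod (a + n))}.
Proof. by apply: (@run_mod_inj _ 1 0) => a _; rewrite !addn0 addn1 ltnSn A_lt_run_end. Qed.

Lemma card_switch_set_le : #|switch_set g| <= #|switch_set f|.
Proof.
rewrite -(card_in_imset left_partner_inj); apply/subset_leq_card/subsetP => _ /imsetP[a _ ->].
exact: ord_mod_switch f_per (switch_next_switch n_gt0 f_per f_switches _).
Qed.

Lemma scaled_sum_excessB h (T : {set 'I_n}) (u v : 'I_n -> nat) :
  periodic n h -> #|switch_set g| = #|T| ->
  {in switch_set g &, injective (fun a : 'I_n => ord_mod (u a))} ->
  (forall a, a \in switch_set g -> ord_mod (u a) \in T) ->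
  {in switch_set g &, injective (fun a : 'I_n => ord_mod (v a))} ->
  (forall a, a \in switch_set g -> ord_mod (v a) \in T) ->
  (n%:Z * \sum_(a in switch_set g) (excess h (u a).+1 - excess h (v a).+1)
   = excess h n * \sum_(a in switch_set g) ((u a)%:Z - (v a)%:Z))%R.
Proof.
move=> h_per card_T u_inj uT v_inj vT.
have drift_S_per : periodic n (fun k => drift n h k.+1).
  by move=> k; rewrite /= -addSn drift_periodic.
rewrite mulr_sumr (eq_bigr _ (fun a _ => excessB_drift n h (u a).+1 (v a).+1)).
rewrite big_split /= sumrB (sum_periodic_reindex drift_S_per card_T u_inj uT v_inj vT).
by rewrite subrr add0r mulr_sumr; apply: eq_bigr => a _; congr (_ * _)%R; lia.
Qed.

Definition partner_gap_sum : int :=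
  (\sum_(a in switch_set g) ((right_partner (a + n))%:Z - (left_partner (a + n))%:Z))%R.

Definition run_length_sum : int :=
  (\sum_(a in switch_set g) ((run_end (a + n))%:Z - (a + n)%:Z))%R.

Lemma excess_period_relation : #|switch_set g| = #|switch_set f| ->
  (excess f n * partner_gap_sum = excess g n * run_length_sum)%R.
Proof.
move=> card_gf.
have fT k : ord_mod (next_switch n f k) \in switch_set f.
  exact: ord_mod_switch f_per (switch_next_switch n_gt0 f_per f_switches k).
have gT k : ord_mod (next_switch n g k) \in switch_set g.
  exact: ord_mod_switch g_per (switch_next_switch n_gt0 g_per g_switches k).
have anchorT a : a \in switch_set g -> ord_mod (a + n) \in switch_set g.
  by move=> aS; apply: ord_mod_switch g_per (switch_set_anchor aS).
rewrite -(scaled_sum_excessB f_per card_gf right_partner_inj (fun a _ => fT _)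
  left_partner_inj (fun a _ => fT _)).
rewrite -(scaled_sum_excessB g_per (erefl _) run_end_inj (fun a _ => gT _) anchor_inj anchorT).
congr (_ * _)%R; apply: eq_bigr => a aS.
by have [_ ->] := partners_excess (switch_set_anchor aS) (r2_le_anchor a).
Qed.

Lemma run_length_sum_lt : runs_at_most r f \/ runs_at_most r g ->
  (run_length_sum < partner_gap_sum)%R.
Proof.
move=> short; have [j /(ord_mod_switch g_per) a0S] := g_switches.
rewrite -subr_gt0 -sumrB (bigD1 _ a0S).
have term_gt0 a : a \in switch_set g -> (0 < (right_partner (a + n))%:Z
    - (left_partner (a + n))%:Z - ((run_end (a + n))%:Z - (a + n)%:Z))%R.
  move=> aS; have sw := switch_set_anchor aS; have r2 := r2_le_anchor a.
  by have [sum_eq _] := partners_excess sw r2; have := left_partner_lt_A sw r2 short; lia.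
apply: ltr_wpDr; last exact: term_gt0 _ a0S.
by apply: sumr_ge0 => a /andP[aS _]; have := term_gt0 a aS; lia.
Qed.

Lemma run_length_sum_ge0 : (0 <= run_length_sum)%R.
Proof. by apply: sumr_ge0 => a _; rewrite subr_ge0 lez_nat ltnW ?A_lt_run_end. Qed.

Lemma excess_period_scaling : #|switch_set g| = #|switch_set f| ->
  runs_at_most r f \/ runs_at_most r g ->
  exists w v : int, (excess f n * w = excess g n * v)%R /\ (0 <= v < w)%R.
Proof.
move=> card_gf short; exists partner_gap_sum, run_length_sum.
by rewrite excess_period_relation // run_length_sum_ge0 run_length_sum_lt.
Qed.
End Correspondence.

Lemma int_cross_eq0 (x y w1 v1 w2 v2 : int) :
  (x * w1 = y * v1)%R -> (y * w2 = x * v2)%R ->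
  (0 <= v1 < w1)%R -> (0 <= v2 < w2)%R -> x = 0%R.
Proof.
move=> e1 e2 /andP[v1_ge0 v1_lt] /andP[v2_ge0 v2_lt].
have : (x * (w1 * w2 - v1 * v2) = 0)%R.
  by rewrite mulrBr mulrA e1 -mulrA mulrCA e2 mulrCA subrr.
by move/eqP; rewrite mulf_eq0 => /orP[/eqP //|/eqP]; nia.
Qed.

Lemma switch_exists_of_runs r h : runs_at_most r h -> exists j, switch h j.
Proof.
move=> short; have [/existsP[k hk]|/existsPn all_eq] := boolP [exists k : 'I_r.+1, h 0 != h k].
  by have [j _ sj] := switch_between (leq0n k) hk; exists j.
by case: (short 0) => k kr; have /negPn/eqP := all_eq (Ordinal (kr : k < r.+1)).
Qed.

Lemma switch_exists_of_majority n r f g : r <= n -> periodic n f -> majority_of r g f ->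
  (exists j, switch f j) -> exists j, switch g j.
Proof.
move=> rn f_per maj_gf [j sj]; have rjn : r <= j + n by apply: leq_trans rn (leq_addl _ _).
have sjn : switch f (j + n) by rewrite (periodic_switch f_per).
have [gl gr _] := switch_majority maj_gf rjn sjn.
have g_ne : g (j + n - r) != g (j + n + r.+1) by rewrite gl gr.
by have [k _ sk] := switch_between (leq_trans (leq_subr _ _) (leq_addr _ _)) g_ne; exists k.
Qed.

Lemma excess_period_eq0 n r f g : 0 < n -> r.*2 <= n -> periodic n f -> periodic n g ->
  majority_of r f g -> majority_of r g f -> runs_at_most r f -> excess f n = 0%R.
Proof.
move=> n_gt0 r2n f_per g_per maj_fg maj_gf short.
have f_sw := switch_exists_of_runs short.
have rn : r <= n by rewrite -leq_double (leq_trans r2n) // -addnn leq_addl.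
have g_sw := switch_exists_of_majority rn f_per maj_gf f_sw.
have card_gf : #|switch_set n g| = #|switch_set n f|.
  apply/eqP; rewrite eqn_leq.
  by rewrite (card_switch_set_le n_gt0 r2n f_per g_per f_sw g_sw maj_fg maj_gf)
    (card_switch_set_le n_gt0 r2n g_per f_per g_sw f_sw maj_gf maj_fg).
have [w1 [v1 [e1 v1_lt]]] := excess_period_scaling n_gt0 r2n f_per g_per f_sw g_sw
  maj_fg maj_gf card_gf (or_introl short).
have [w2 [v2 [e2 v2_lt]]] := excess_period_scaling n_gt0 r2n g_per f_per g_sw f_sw
  maj_gf maj_fg (esym card_gf) (or_intror short).
exact: int_cross_eq0 e1 e2 v1_lt v2_lt.
Qed.

Lemma count_iota_sum (h : nat -> bool) m : count h (iota 0 m) = \sum_(k < m) h k.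
Proof.
elim: m => [|m IH]; first by rewrite big_ord0.
by rewrite -[in LHS]addn1 iotaD count_cat IH big_ord_recr /= addn0.
Qed.

Lemma sum_bool_compl (h : nat -> bool) m : \sum_(k < m) h k + \sum_(k < m) ~~ h k = m.
Proof.
rewrite -big_split /= (eq_bigr (fun _ => 1)) => [|k _]; last by case: (h k).
by rewrite sum1_card card_ord.
Qed.

Section Unroll.
Variables (n r : nat) (s : 'Z_n -> bool).
Hypothesis n_gt1 : 1 < n.

Definition unroll (t : 'Z_n -> bool) (j : nat) : bool := t (j%:R)%R.

Lemma unroll_periodic t : periodic n (unroll t).
Proof. by move=> j; rewrite /unroll natrD pchar_Zp // addr0. Qed.

Lemma count_window (p : pred 'Z_n) j :
  count p (window r ((j + r)%N%:R)%R) = \sum_(k < r.*2.+1) unroll p (j + k).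
Proof.
rewrite /window count_map count_iota_sum; apply: eq_bigr => k _.
by rewrite /unroll /= natrD addrK natrD.
Qed.

Lemma majority_unroll t : majority_of r (unroll t) (unroll (maj r t)).
Proof.
move=> j; rewrite {1}/unroll /maj /ones_in /zeros_in !count_window /unroll /=.
have := sum_bool_compl (fun k => unroll t (j + k)) r.*2.+1; rewrite /unroll /=.
by case: ltnP => ?; case: ltnP => ? //=; lia.
Qed.

Lemma majority_unroll_periodic :
  temporally_periodic r s -> majority_of r (unroll (maj r s)) (unroll s).
Proof. by move=> tp j; rewrite -majority_unroll /unroll tp. Qed.

Lemma max_hom_block_unroll m : switch (unroll s) m ->
  max_hom_block s (m.+1%:R)%R (next_switch n (unroll s) m.+1 - m) (unroll s m.+1).
Proof.
move=> sw_m; have n_gt0 : 0 < n by lia.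
have per := unroll_periodic s; have sw : exists j, switch (unroll s) j by exists m.
have q_ge := leq_next_switch n (unroll s) m.+1.
have q_lt := next_switch_lt n_gt0 per sw m.+1.
split; [lia | lia | move=> k k_lt | right; split].
- rewrite -natrD; apply: (next_switch_run n_gt0 per sw); lia.
- by rewrite -natr1 addrK; move: sw_m; rewrite /switch /unroll; case: (s _); case: (s _).
- rewrite -natrD (_ : m.+1 + _ = (next_switch n (unroll s) m.+1).+1); last by lia.
  exact: (next_switch_flip n_gt0 per sw).
Qed.

Lemma runs_at_most_unroll : r < n ->
  (forall i L b, max_hom_block s i L b -> L <= r) -> runs_at_most r (unroll s).
Proof.
move=> r_lt_n short_blocks j run_j; have n_gt0 : 0 < n by lia.
have per := unroll_periodic s.
have [/existsP[k0 sw_k0] | /existsPn no_sw] := boolP [exists k : 'I_n, switch (unroll s) k].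
  have sw : exists k, switch (unroll s) k by exists k0.
  pose P k := (k < j + n) && switch (unroll s) k.
  have P_ex : exists k, P k.
    exists (next_switch n (unroll s) j).
    by rewrite /P next_switch_lt // switch_next_switch.
  have P_ub k : P k -> k <= j + n by case/andP => /ltnW.
  have [m /andP[m_lt sw_m] m_max] := ex_maxnP P_ex P_ub.
  have run_jn i : i <= r -> unroll s (j + n + i) = unroll s j.
    by move=> ir; rewrite addnAC per run_j.
  have no_sw_run k : switch (unroll s) k -> j + n <= k -> j + n + r <= k.
    move=> sw_k lo; rewrite leqNgt; apply/negP => hi; move: sw_k.
    by rewrite -(subnKC lo) /switch -addnS !run_jn ?eqxx //; lia.
  have q_ge : j + n + r <= next_switch n (unroll s) m.+1.
    have sw_q := switch_next_switch n_gt0 per sw m.+1.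
    apply: (no_sw_run _ sw_q); rewrite leqNgt; apply/negP => q_lt.
    have Pq : P (next_switch n (unroll s) m.+1) by rewrite /P q_lt sw_q.
    by have := m_max _ Pq; have := leq_next_switch n (unroll s) m.+1; lia.
  by have := short_blocks _ _ _ (max_hom_block_unroll sw_m); lia.
have const k : k <= n -> unroll s k = unroll s 0.
  move=> kn; apply: (@run_until _ 0 n) => // i /andP[_ i_lt] _.
  exact: no_sw (Ordinal i_lt).
have : n <= r.
  apply: (short_blocks 0%R n (s 0%R)); split=> //; [move=> k k_lt | by left].
  by rewrite add0r; apply: (const k (ltnW k_lt)).
by lia.
Qed.

Lemma card_unroll (p : pred 'Z_n) : #|[pred i | p i]| = \sum_(k < n) unroll p k.
Proof.
rewrite -sum1_card big_mkcond /=.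
rewrite (eq_bigr (fun i : 'Z_n => (unroll p i : nat))) => [|i _]; last first.
  by rewrite /unroll natr_Zp inE; case: (p i).
by rewrite -(big_mkord xpredT (fun j => (unroll p j : nat))) Zp_cast // big_mkord.
Qed.

Lemma balanced_of_excess : excess (unroll s) n = 0%R -> balanced s.
Proof.
rewrite excess_sum /balanced !card_unroll.
by have := sum_bool_compl (unroll s) n; rewrite /unroll /=; lia.
Qed.
End Unroll.

Theorem claim21 (r n : nat) (s : 'Z_n -> bool) :
  (1 <= r)%N -> (r.*2 < n)%N ->
  temporally_periodic r s ->
  (forall (i : 'Z_n) (L : nat) (b : bool), max_hom_block s i L b -> (L <= r)%N) ->
  balanced s.
Proof.
move=> r_ge1 r2_lt_n s_periodic short_blocks.
have n_gt1 : 1 < n by lia.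
apply: balanced_of_excess => //.
apply: (@excess_period_eq0 n r _ (unroll (maj r s))).
- lia.
- lia.
- exact: unroll_periodic.
- exact: unroll_periodic.
- exact: majority_unroll.
- exact: majority_unroll_periodic.
- by apply: runs_at_most_unroll => //; lia.
Qed.
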